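(* Let $(h_n)_{n\ge1}$ be the Hermite functions, i.e. the $L^2(\mathbb{R})$-normalized eigenfunctions of $T=-\frac{d^2}{dx^2}+x^2$ with $Th_n=(2n-1)h_n$, $\|h_n\|_{L^2(\mathbb{R})}=1$. Let $\delta_1>0$. Then there is a constant $C_{\delta_1}$ depending only on $\delta_1$ such that for every $n\ge1$, $$\left(\int_{\mathbb{R}}\frac{h_n^2(x)}{(1+\ln(1+x^2))^{2\delta_1}}\,dx\right)^{1/2}\le\frac{C_{\delta_1}}{(1+\ln n)^{\delta_1}}.$$ *)

From Stdlib Require Import Reals.
From Coquelicot Require Import Coquelicot.
Open Scope R_scope.

Definition is_integral_R (f : R -> R) (l : R) : Prop :=
  is_RInt_gen f (Rbar_locally m_infty) (Rbar_locally p_infty) l.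

Definition hermite_eigen (f : R -> R) (lam : R) : Prop :=
  (forall x, ex_derive f x) /\
  (forall x, ex_derive (Derive f) x) /\
  (forall x, - Derive (Derive f) x + x ^ 2 * f x = lam * f x).

(* (h_n)_{n >= 1} is a family of Hermite functions: T h_n = (2n-1) h_n and
   ||h_n||_{L^2(R)} = 1 (this determines h_n up to sign). *)
Definition hermite_family (h : nat -> R -> R) : Prop :=
  forall n : nat, (1 <= n)%nat ->
    hermite_eigen (h n) (2 * INR n - 1) /\
    is_integral_R (fun x => h n x ^ 2) 1.

(* With lambda = s^2 = 2n - 1 and h'' = (x^2 - lambda) h, the energy
   E = h'^2 + (lambda - x^2) h^2 has E' = -2 x h^2, so it is maximal at 0, and the unit
   L^2 mass gives E(0) - E(x) <= 2x for x >= 0.  Integrating E over [0, s/2] once from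
   this lower bound and once through E = (h h')' + 2 (lambda - x^2) h^2 yields
   E(0) <= 10 s, hence h^2 <= 20 / s on x^2 <= s^2 / 2.  Split the weighted integral at
   r = s^(1/2): the inner part is at most 40 / r, the outer part at most 1 / w(r) for the
   weight w, and both r and w(r) dominate (1 + ln n)^(2 delta1) up to constants. *)

From Stdlib Require Import Reals Lra Psatz Classical.
From Coquelicot Require Import Coquelicot.
Open Scope R_scope.

Lemma continuous_of_ex_derive (f : R -> R) x : ex_derive f x -> continuous f x.
Proof. exact (@ex_derive_continuous R_AbsRing R_NormedModule f x). Qed.

Lemma ex_RInt_of_continuous (f : R -> R) a b :
  (forall x, continuous f x) -> ex_RInt f a b.
Proof. intros Hc; apply (@ex_RInt_continuous R_CompleteNormedModule); intros; apply Hc. Qed.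

Lemma RInt_scal_R (f : R -> R) a b c :
  ex_RInt f a b -> RInt (fun t => c * f t) a b = c * RInt f a b.
Proof. exact (@RInt_scal R_CompleteNormedModule f a b c). Qed.

Lemma RInt_plus_R (f g : R -> R) a b : ex_RInt f a b -> ex_RInt g a b ->
  RInt (fun t => f t + g t) a b = RInt f a b + RInt g a b.
Proof. exact (@RInt_plus R_CompleteNormedModule f g a b). Qed.

Lemma RInt_const_R a b c : RInt (fun _ => c) a b = (b - a) * c.
Proof. exact (@RInt_const R_CompleteNormedModule a b c). Qed.

Lemma RInt_Chasles_R (f : R -> R) a b c : (forall x, continuous f x) ->
  RInt f a b + RInt f b c = RInt f a c.
Proof.
  intro Hc.
  exact (@RInt_Chasles R_CompleteNormedModule f a b c
           (ex_RInt_of_continuous f a b Hc) (ex_RInt_of_continuous f b c Hc)).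
Qed.

Lemma RInt_is_derive (f F : R -> R) a b :
  (forall x, is_derive F x (f x)) -> (forall x, continuous f x) ->
  RInt f a b = F b - F a.
Proof.
  intros HF Hc. apply (@is_RInt_unique R_CompleteNormedModule).
  apply (@is_RInt_derive R_CompleteNormedModule); intros; auto.
Qed.

Section NonnegativeIntegrals.

Variable f : R -> R.
Hypothesis f_cont : forall x, continuous f x.
Hypothesis f_ge0 : forall x, 0 <= f x.

Lemma RInt_le_RInt_widen a' a b b' :
  a' <= a -> a <= b -> b <= b' -> RInt f a b <= RInt f a' b'.
Proof.
  intros Ha Hab Hb.
  rewrite <- (RInt_Chasles_R f a' a b'), <- (RInt_Chasles_R f a b b') by exact f_cont.
  assert (0 <= RInt f a' a) by (apply RInt_ge_0; auto; apply ex_RInt_of_continuous, f_cont).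
  assert (0 <= RInt f b b') by (apply RInt_ge_0; auto; apply ex_RInt_of_continuous, f_cont).
  lra.
Qed.

Lemma RInt_le_is_integral_R l :
  is_integral_R f l -> forall a b, a <= b -> RInt f a b <= l.
Proof.
  intros Hf a b Hab.
  apply Rnot_lt_le; intro Hlt.
  assert (Heps : 0 < RInt f a b - l) by lra.
  destruct (Hf _ (locally_ball l (mkposreal _ Heps))) as [P Q [M1 HM1] [M2 HM2] HPQ].
  destruct (HPQ (Rmin a (M1 - 1)) (Rmax b (M2 + 1))) as [y [Hy Hball]].
  - apply HM1. pose proof (Rmin_r a (M1 - 1)); lra.
  - apply HM2. pose proof (Rmax_r b (M2 + 1)); lra.
  - apply (@is_RInt_unique R_CompleteNormedModule) in Hy. simpl in Hy.
    assert (RInt f a b <= y).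
    { rewrite <- Hy. apply RInt_le_RInt_widen; [apply Rmin_l | exact Hab | apply Rmax_l]. }
    change (Rabs (y - l) < RInt f a b - l) in Hball.
    apply Rabs_lt_between in Hball. lra.
Qed.

(* The witness is the supremum of the integrals over [-b, b]. *)
Lemma is_integral_R_of_RInt_le M :
  (forall b, 0 <= b -> RInt f (-b) b <= M) -> exists I, is_integral_R f I /\ I <= M.
Proof.
  intros HM.
  set (E := fun v => exists b, 0 <= b /\ v = RInt f (-b) b).
  destruct (completeness E) as [I [HI_ub HI_lub]].
  - exists M. intros v [b [Hb ->]]. auto.
  - exists (RInt f (-0) 0), 0. split; [lra | reflexivity].
  - exists I. split; [|apply HI_lub; intros v [b [Hb ->]]; auto].
    intros P [eps Heps].
    destruct (classic (exists b, 0 <= b /\ I - eps < RInt f (-b) b))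
      as [[B [HB HIB]] | Hnot].
    2:{ exfalso. assert (I <= I - eps); [|pose proof (cond_pos eps); lra].
        apply HI_lub. intros v [b [Hb ->]].
        apply Rnot_lt_le. intro. apply Hnot. exists b; auto. }
    apply Filter_prod with (Q := fun a => a < -B) (R := fun b => B < b);
      [exists (-B); auto | exists B; auto |].
    intros x y Hx Hy. exists (RInt f x y). split.
    + apply (@RInt_correct R_CompleteNormedModule), ex_RInt_of_continuous, f_cont.
    + apply Heps. change (Rabs (RInt f x y - I) < eps). apply Rabs_lt_between.
      set (b := Rmax (-x) y).
      assert (Hxb : -x <= b) by apply Rmax_l.
      assert (Hyb : y <= b) by apply Rmax_r.
      assert (RInt f (-B) B <= RInt f x y) by (apply RInt_le_RInt_widen; lra).
      assert (RInt f x y <= RInt f (-b) b) by (apply RInt_le_RInt_widen; lra).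
      assert (RInt f (-b) b <= I) by (apply HI_ub; exists b; split; [lra | reflexivity]).
      pose proof (cond_pos eps). lra.
Qed.

End NonnegativeIntegrals.

Lemma is_integral_R_split_le (f g : R -> R) (r c e : R) :
  (forall x, continuous f x) -> (forall x, continuous g x) ->
  (forall x, 0 <= f x) -> (forall x, 0 <= g x) ->
  (forall a b, a <= b -> RInt g a b <= 1) ->
  0 <= r -> 0 <= e ->
  (forall x, -r <= x <= r -> f x <= c) ->
  (forall x, r <= Rabs x -> f x <= e * g x) ->
  exists I, is_integral_R f I /\ I <= 2 * r * c + e.
Proof.
  intros Cf Cg Hf0 Hg0 Hg1 Hr He Hcore Htail.
  assert (Hmid : RInt f (-r) r <= 2 * r * c).
  { replace (2 * r * c) with (RInt (fun _ => c) (-r) r)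
      by (rewrite RInt_const_R; lra).
    apply RInt_le; [lra | apply ex_RInt_of_continuous; auto
                   | apply ex_RInt_of_continuous; intro; apply continuous_const |].
    intros; apply Hcore; lra. }
  assert (Htail_le : forall a b, a <= b -> (forall x, a < x < b -> r <= Rabs x) ->
            RInt f a b <= e * RInt g a b).
  { intros a b Hab Hx. rewrite <- RInt_scal_R by (apply ex_RInt_of_continuous; auto).
    apply RInt_le; [lra | apply ex_RInt_of_continuous; auto
                   | exact (@ex_RInt_scal R_CompleteNormedModule g a b e
                              (ex_RInt_of_continuous g a b Cg)) |].
    intros x Hx'. apply Htail, Hx, Hx'. }
  apply is_integral_R_of_RInt_le; auto.
  intros b Hb. destruct (Rle_or_lt b r) as [Hbr | Hrb].
  - assert (RInt f (-b) b <= RInt f (-r) r) by (apply RInt_le_RInt_widen; auto; lra).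
    lra.
  - rewrite <- (RInt_Chasles_R f (-b) (-r) b), <- (RInt_Chasles_R f (-r) r b) by auto.
    assert (Hleft : RInt f (-b) (-r) <= e * RInt g (-b) (-r)).
    { apply Htail_le; [lra |]. intros x Hx. rewrite Rabs_left by lra. lra. }
    assert (Hright : RInt f r b <= e * RInt g r b).
    { apply Htail_le; [lra |]. intros x Hx. rewrite Rabs_right by lra. lra. }
    assert (Hmass : RInt g (-b) (-r) + RInt g (-r) r + RInt g r b <= 1).
    { rewrite (RInt_Chasles_R g (-b) (-r) r), RInt_Chasles_R by auto. apply Hg1; lra. }
    assert (0 <= RInt g (-r) r).
    { apply RInt_ge_0; [lra | apply ex_RInt_of_continuous |]; auto. }
    nra.
Qed.

Section HermiteEnergy.

Variables (h : R -> R) (s : R).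
Hypothesis h_eigen : hermite_eigen h (s ^ 2).
Hypothesis h_mass : forall a b, a <= b -> RInt (fun t => h t ^ 2) a b <= 1.

Definition hermite_energy t := Derive h t ^ 2 + (s ^ 2 - t ^ 2) * h t ^ 2.

Let ex_derive_h t : ex_derive h t.
Proof. apply h_eigen. Qed.

Let ex_derive_Derive_h t : ex_derive (Derive h) t.
Proof. apply h_eigen. Qed.

Lemma Derive_Derive_hermite t : Derive (Derive h) t = (t ^ 2 - s ^ 2) * h t.
Proof. destruct h_eigen as [_ [_ Hode]]. specialize (Hode t). lra. Qed.

Lemma is_derive_hermite_energy t :
  is_derive hermite_energy t (- (2 * t * h t ^ 2)).
Proof.
  unfold hermite_energy. auto_derive; [auto |].
  rewrite Derive_Derive_hermite. change (fun x => h x) with h. ring.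
Qed.

Lemma is_derive_hermite_mul_Derive t :
  is_derive (fun u => h u * Derive h u) t (Derive h t ^ 2 + (t ^ 2 - s ^ 2) * h t ^ 2).
Proof.
  auto_derive; [auto |].
  rewrite Derive_Derive_hermite. change (fun x => h x) with h. ring.
Qed.

Local Ltac ex_RInt_smooth :=
  apply ex_RInt_of_continuous; intro; apply continuous_of_ex_derive; auto_derive; auto.

Lemma hermite_energy_le_origin x : hermite_energy x <= hermite_energy 0.
Proof.
  destruct (MVT_gen hermite_energy 0 x (fun t => - (2 * t * h t ^ 2)))
    as [c [Hc Hmvt]].
  - intros t _. apply is_derive_hermite_energy.
  - intros t _. apply continuity_pt_filterlim, continuous_of_ex_derive.
    eexists. apply is_derive_hermite_energy.
  - assert (0 <= c * x).
    { revert Hc. unfold Rmin, Rmax. destruct Rle_dec; intros; nra. }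
    assert (0 <= h c ^ 2) by apply pow2_ge_0.
    nra.
Qed.

Lemma hermite_energy_decay x : 0 <= x -> hermite_energy 0 - hermite_energy x <= 2 * x.
Proof.
  intros Hx.
  assert (Hftc : RInt (fun t => - (2 * t * h t ^ 2)) 0 x
                 = hermite_energy x - hermite_energy 0).
  { apply RInt_is_derive; [apply is_derive_hermite_energy |].
    intro; apply continuous_of_ex_derive; auto_derive; auto. }
  assert (Hcmp : RInt (fun t => (- (2 * x)) * h t ^ 2) 0 x
          <= RInt (fun t => - (2 * t * h t ^ 2)) 0 x).
  { apply RInt_le; [exact Hx | ex_RInt_smooth | ex_RInt_smooth |].
    intros t Ht. assert (0 <= h t ^ 2) by apply pow2_ge_0. nra. }
  rewrite RInt_scal_R in Hcmp by ex_RInt_smooth.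
  pose proof (h_mass 0 x Hx). nra.
Qed.

Lemma RInt_hermite_energy_ge a :
  0 <= a -> a * (hermite_energy 0 - 2 * a) <= RInt hermite_energy 0 a.
Proof.
  intros Ha.
  replace (a * (hermite_energy 0 - 2 * a))
    with (RInt (fun _ => hermite_energy 0 - 2 * a) 0 a)
    by (rewrite RInt_const_R, Rminus_0_r; reflexivity).
  apply RInt_le; [exact Ha | apply ex_RInt_of_continuous; intro; apply continuous_const
                 | unfold hermite_energy; ex_RInt_smooth |].
  intros t Ht. pose proof (hermite_energy_decay t ltac:(lra)). lra.
Qed.

Lemma RInt_hermite_energy_le a : 0 <= a ->
  RInt hermite_energy 0 a <= 2 * s ^ 2 + h a * Derive h a - h 0 * Derive h 0.
Proof.
  intros Ha.
  assert (Hsplit : RInt hermite_energy 0 a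
    = RInt (fun t => 2 * (s ^ 2 - t ^ 2) * h t ^ 2) 0 a
      + RInt (fun t => Derive h t ^ 2 + (t ^ 2 - s ^ 2) * h t ^ 2) 0 a).
  { rewrite <- RInt_plus_R by ex_RInt_smooth.
    apply RInt_ext. intros t _. unfold hermite_energy. simpl. ring. }
  assert (Hftc : RInt (fun t => Derive h t ^ 2 + (t ^ 2 - s ^ 2) * h t ^ 2) 0 a
                 = h a * Derive h a - h 0 * Derive h 0).
  { apply (RInt_is_derive _ (fun u => h u * Derive h u));
      [apply is_derive_hermite_mul_Derive |].
    intro; apply continuous_of_ex_derive; auto_derive; auto. }
  assert (Hcmp : RInt (fun t => 2 * (s ^ 2 - t ^ 2) * h t ^ 2) 0 a
          <= RInt (fun t => (2 * s ^ 2) * h t ^ 2) 0 a).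
  { apply RInt_le; [exact Ha | ex_RInt_smooth | ex_RInt_smooth |].
    intros t Ht. assert (0 <= h t ^ 2) by apply pow2_ge_0. nra. }
  rewrite RInt_scal_R in Hcmp by ex_RInt_smooth.
  pose proof (h_mass 0 a Ha). assert (0 <= s ^ 2) by apply pow2_ge_0.
  nra.
Qed.

Lemma Rabs_hermite_mul_Derive_le x :
  x ^ 2 <= s ^ 2 / 4 -> Rabs (s * (h x * Derive h x)) <= hermite_energy 0.
Proof.
  intros Hx. pose proof (hermite_energy_le_origin x) as HE.
  unfold hermite_energy in *.
  assert (0 <= h x ^ 2) by apply pow2_ge_0.
  assert (0 <= (Derive h x - s / 2 * h x) ^ 2) by apply pow2_ge_0.
  assert (0 <= (Derive h x + s / 2 * h x) ^ 2) by apply pow2_ge_0.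
  apply Rabs_le. split; nra.
Qed.

Lemma hermite_energy_origin_le : 0 < s -> 8 <= s ^ 2 -> hermite_energy 0 <= 10 * s.
Proof.
  intros Hs Hs8. set (a := s / 2).
  pose proof (RInt_hermite_energy_ge a ltac:(unfold a; lra)).
  pose proof (RInt_hermite_energy_le a ltac:(unfold a; lra)).
  pose proof (Rabs_hermite_mul_Derive_le 0 ltac:(nra)) as Hbound0.
  pose proof (Rabs_hermite_mul_Derive_le a ltac:(unfold a; nra)) as Hbounda.
  apply Rabs_le_between in Hbound0. apply Rabs_le_between in Hbounda.
  assert (0 <= hermite_energy 0).
  { unfold hermite_energy. pose proof (pow2_ge_0 (Derive h 0)).
    pose proof (pow2_ge_0 (h 0)). nra. }
  unfold a in *. nra.
Qed.

Lemma hermite_sq_le x :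
  0 < s -> 8 <= s ^ 2 -> x ^ 2 <= s ^ 2 / 2 -> h x ^ 2 <= 20 / s.
Proof.
  intros Hs Hs8 Hx.
  pose proof (hermite_energy_le_origin x). pose proof hermite_energy_origin_le Hs Hs8.
  unfold hermite_energy in *. pose proof (pow2_ge_0 (Derive h x)).
  assert (s ^ 2 / 2 * h x ^ 2 <= 10 * s) by (pose proof (pow2_ge_0 (h x)); nra).
  apply Rmult_le_reg_l with s; [exact Hs |].
  field_simplify; [nra | lra].
Qed.

End HermiteEnergy.

Lemma Rpower_gt_0 x y : 0 < Rpower x y.
Proof. apply exp_pos. Qed.

Lemma ln_ge_0 x : 1 <= x -> 0 <= ln x.
Proof. intro Hx. rewrite <- ln_1. apply ln_le; lra. Qed.

Lemma Rpower_quarter x : 0 < x -> Rpower x (/ 4) = sqrt (sqrt x).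
Proof.
  intro Hx. replace (/ 4) with (/ 2 * / 2) by field.
  rewrite <- Rpower_mult, (Rpower_sqrt x Hx). apply Rpower_sqrt, sqrt_lt_R0, Hx.
Qed.

(* From 1 + u <= (1 + c) (1 + u / c) <= (1 + c) exp (u / c) with u = ln x. *)
Lemma one_plus_ln_le c x : 0 < c -> 1 <= x -> 1 + ln x <= (1 + c) * Rpower x (/ c).
Proof.
  intros Hc Hx. pose proof (ln_ge_0 x Hx).
  unfold Rpower. pose proof (exp_ineq1_le (/ c * ln x)).
  assert (0 <= / c * ln x) by (apply Rmult_le_pos; [left; apply Rinv_0_lt_compat |]; lra).
  assert (c * (/ c * ln x) = ln x) by (field; lra).
  nra.
Qed.

Lemma Rpower_one_plus_ln_le p x : 0 < p -> 1 <= x ->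
  Rpower (1 + ln x) p <= Rpower (1 + 4 * p) p * Rpower x (/ 4).
Proof.
  intros Hp Hx. pose proof (ln_ge_0 x Hx).
  eapply Rle_trans.
  { apply Rle_Rpower_l; [lra | split; [lra | apply (one_plus_ln_le (4 * p)); lra]]. }
  rewrite <- Rpower_mult_distr by (lra || apply Rpower_gt_0).
  rewrite Rpower_mult. replace (/ (4 * p) * p) with (/ 4) by (field; lra).
  lra.
Qed.

Lemma Rpower_ge_1 b z : 1 <= b -> 0 <= z -> 1 <= Rpower b z.
Proof. intros Hb Hz. rewrite <- (Rpower_O b) by lra. apply Rle_Rpower; auto. Qed.

Definition log_weight (p x : R) : R := Rpower (1 + ln (1 + x ^ 2)) p.

Lemma log_weight_ge_1 p x : 0 <= p -> 1 <= log_weight p x.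
Proof.
  intros Hp. apply Rpower_ge_1; [| exact Hp].
  pose proof (pow2_ge_0 x). pose proof (ln_ge_0 (1 + x ^ 2) ltac:(lra)). lra.
Qed.

Lemma log_weight_le p r x : 0 <= p -> 0 <= r <= Rabs x ->
  log_weight p r <= log_weight p x.
Proof.
  intros Hp Hrx. assert (r ^ 2 <= x ^ 2) by (rewrite <- (pow2_abs x); nra).
  apply Rle_Rpower_l; [exact Hp | split].
  - pose proof (pow2_ge_0 r). pose proof (ln_ge_0 (1 + r ^ 2) ltac:(lra)). lra.
  - apply Rplus_le_compat_l, ln_le; nra.
Qed.

Lemma ex_derive_log_weight p x : ex_derive (log_weight p) x.
Proof.
  unfold log_weight, Rpower. auto_derive. pose proof (pow2_ge_0 x).
  pose proof (ln_ge_0 (1 + x * (x * 1))). split; nra.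
Qed.

Lemma div_log_weight_le_self p g x : 0 <= p -> 0 <= g -> g / log_weight p x <= g.
Proof.
  intros Hp Hg. pose proof (log_weight_ge_1 p x Hp).
  apply Rmult_le_reg_r with (log_weight p x); [lra |].
  unfold Rdiv. rewrite Rmult_assoc, Rinv_l by lra. nra.
Qed.

Lemma div_log_weight_le p g r x : 0 <= p -> 0 <= g -> 0 <= r <= Rabs x ->
  g / log_weight p x <= / log_weight p r * g.
Proof.
  intros Hp Hg Hrx. pose proof (log_weight_ge_1 p r Hp).
  pose proof (log_weight_le p r x Hp Hrx).
  rewrite Rmult_comm. apply Rmult_le_compat_l; [exact Hg |].
  apply Rinv_le_contravar; lra.
Qed.

Lemma Rpower_one_plus_ln_le_log_weight p x r : 0 <= p -> 1 <= x -> x <= (1 + r ^ 2) ^ 2 ->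
  Rpower (1 + ln x) p <= Rpower 2 p * log_weight p r.
Proof.
  intros Hp Hx Hxr. pose proof (ln_ge_0 x Hx).
  assert (Hlnr : 0 <= ln (1 + r ^ 2)) by (pose proof (pow2_ge_0 r); apply ln_ge_0; lra).
  unfold log_weight. rewrite Rpower_mult_distr by lra.
  apply Rle_Rpower_l; [exact Hp | split; [lra |]].
  assert (Hln : ln x <= ln ((1 + r ^ 2) ^ 2)) by (apply ln_le; lra).
  rewrite ln_pow in Hln by (pose proof (pow2_ge_0 r); lra). simpl INR in Hln.
  lra.
Qed.

Lemma sqrt_le_div_of_mul_sq_le I K q : 0 < q -> I * q ^ 2 <= K -> sqrt I <= sqrt K / q.
Proof.
  intros Hq HIK. apply Rmult_le_reg_r with q; [exact Hq |].
  unfold Rdiv. rewrite Rmult_assoc, Rinv_l, Rmult_1_r by lra.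
  destruct (Rlt_or_le I 0) as [HI | HI].
  - rewrite sqrt_neg_0 by lra. rewrite Rmult_0_l. apply sqrt_pos.
  - rewrite <- (sqrt_pow2 q) by lra. rewrite <- sqrt_mult_alt by exact HI.
    apply sqrt_le_1_alt, HIK.
Qed.

Lemma is_integral_R_div_log_weight_le p h r c :
  0 <= p -> (forall x, ex_derive h x) ->
  (forall a b, a <= b -> RInt (fun t => h t ^ 2) a b <= 1) ->
  0 <= r -> (forall x, -r <= x <= r -> h x ^ 2 <= c) ->
  exists I, is_integral_R (fun x => h x ^ 2 / log_weight p x) I /\
    I <= 2 * r * c + / log_weight p r.
Proof.
  intros Hp Hh Hmass Hr Hcore.
  apply is_integral_R_split_le with (g := fun t => h t ^ 2); auto.
  - intro x. apply continuous_of_ex_derive. auto_derive.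
    pose proof (log_weight_ge_1 p x Hp).
    repeat split; auto using ex_derive_log_weight; lra.
  - intro. apply continuous_of_ex_derive. auto_derive. auto.
  - intro x. pose proof (log_weight_ge_1 p x Hp).
    apply Rdiv_le_0_compat; [apply pow2_ge_0 | lra].
  - intro. apply pow2_ge_0.
  - pose proof (log_weight_ge_1 p r Hp). left. apply Rinv_0_lt_compat. lra.
  - intros x Hx. eapply Rle_trans; [apply div_log_weight_le_self |]; auto using pow2_ge_0.
  - intros x Hx. apply div_log_weight_le; auto using pow2_ge_0.
Qed.

Definition log_weight_constant (p : R) : R := 40 * Rpower (1 + 4 * p) p + Rpower 2 p.

Section LogWeightedHermiteMass.

Variables (p nu : R) (h : R -> R).
Hypothesis p_gt0 : 0 < p.
Hypothesis nu_ge1 : 1 <= nu.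
Hypothesis h_diff : forall x, ex_derive h x.
Hypothesis h_mass : forall a b, a <= b -> RInt (fun t => h t ^ 2) a b <= 1.

Let A := Rpower (1 + 4 * p) p.
Let P := Rpower (1 + ln nu) p.

Let P_le : P <= A * Rpower nu (/ 4).
Proof. apply Rpower_one_plus_ln_le; lra. Qed.

Let A_gt0 : 0 < A.
Proof. apply Rpower_gt_0. Qed.

Let P_gt0 : 0 < P.
Proof. apply Rpower_gt_0. Qed.

Lemma log_weighted_mass_le_small : nu <= 9 / 2 ->
  exists I, is_integral_R (fun x => h x ^ 2 / log_weight p x) I /\
    I * P <= log_weight_constant p.
Proof.
  intros Hnu.
  destruct (is_integral_R_div_log_weight_le p h 0 (h 0 ^ 2)) as [I [HI HIle]]; auto; try lra.
  { intros x Hx. replace x with 0 by lra. lra. }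
  exists I. split; [exact HI |].
  assert (Rpower nu (/ 4) <= nu).
  { rewrite <- (Rpower_1 nu) at 2 by lra. apply Rle_Rpower; lra. }
  assert (/ log_weight p 0 <= 1).
  { pose proof (log_weight_ge_1 p 0). rewrite <- Rinv_1. apply Rinv_le_contravar; lra. }
  pose proof (Rpower_gt_0 2 p).
  unfold log_weight_constant. fold A. nra.
Qed.

Lemma log_weighted_mass_le_large : hermite_eigen h (2 * nu - 1) -> 9 / 2 < nu ->
  exists I, is_integral_R (fun x => h x ^ 2 / log_weight p x) I /\
    I * P <= log_weight_constant p.
Proof.
  intros Heig Hnu.
  set (s := sqrt (2 * nu - 1)).
  assert (Hs2 : s ^ 2 = 2 * nu - 1) by (apply pow2_sqrt; lra).
  assert (Hs : 0 < s) by (apply sqrt_lt_R0; lra).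
  set (r := sqrt s).
  assert (Hr2 : r ^ 2 = s) by (apply pow2_sqrt; lra).
  assert (Hr : 0 < r) by (apply sqrt_lt_R0; lra).
  rewrite <- Hs2 in Heig.
  destruct (is_integral_R_div_log_weight_le p h r (20 / s)) as [I [HI HIle]]; auto; try lra.
  { intros x Hx. assert (Hs8 : 8 <= s ^ 2) by lra.
    apply (hermite_sq_le h s Heig h_mass x Hs Hs8).
    assert (x ^ 2 <= s) by (rewrite <- Hr2; nra).
    nra. }
  exists I. split; [exact HI |].
  assert (HPr : P <= A * r).
  { eapply Rle_trans; [exact P_le |]. apply Rmult_le_compat_l; [lra |].
    rewrite Rpower_quarter by lra. apply sqrt_le_1_alt, sqrt_le_1_alt. lra. }
  assert (HPw : P <= Rpower 2 p * log_weight p r).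
  { apply Rpower_one_plus_ln_le_log_weight; [lra | lra |]. rewrite Hr2. nra. }
  pose proof (log_weight_ge_1 p r).
  replace (2 * r * (20 / s)) with (40 / r) in HIle by (rewrite <- Hr2; field; lra).
  apply Rle_trans with ((40 / r + / log_weight p r) * P); [nra |].
  unfold log_weight_constant. fold A.
  apply Rmult_le_reg_r with (r * log_weight p r); [nra |].
  field_simplify; [nra | split; lra].
Qed.

End LogWeightedHermiteMass.


Lemma hermite_log_weighted_mass_le p nu h :
  0 < p -> 1 <= nu -> hermite_eigen h (2 * nu - 1) ->
  is_integral_R (fun x => h x ^ 2) 1 ->
  exists I, is_integral_R (fun x => h x ^ 2 / log_weight p x) I /\
    I * Rpower (1 + ln nu) p <= log_weight_constant p.
Proof.
  intros Hp Hnu Heig Hint.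
  assert (Hh : forall x, ex_derive h x) by apply Heig.
  assert (Hmass : forall a b, a <= b -> RInt (fun t => h t ^ 2) a b <= 1).
  { apply RInt_le_is_integral_R; auto using pow2_ge_0.
    intro. apply continuous_of_ex_derive. auto_derive. auto. }
  destruct (Rle_or_lt nu (9 / 2)).
  - apply log_weighted_mass_le_small; auto.
  - apply log_weighted_mass_le_large; auto.
Qed.

Theorem lemma1p4 (delta1 : R) (Hdelta1 : 0 < delta1) :
  exists C : R,
    forall h : nat -> R -> R, hermite_family h ->
    forall n : nat, (1 <= n)%nat ->
      exists I : R,
        is_integral_R
          (fun x => h n x ^ 2 / Rpower (1 + ln (1 + x ^ 2)) (2 * delta1)) I /\
        sqrt I <= C / Rpower (1 + ln (INR n)) delta1.
Proof.
  exists (sqrt (log_weight_constant (2 * delta1))).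
  intros h Hfam n Hn.
  destruct (Hfam n Hn) as [Heig Hint].
  assert (HnR : 1 <= INR n) by exact (le_INR 1 n Hn).
  destruct (hermite_log_weighted_mass_le (2 * delta1) (INR n) (h n))
    as [I [HI HIP]]; [lra | exact HnR | exact Heig | exact Hint |].
  exists I. split; [exact HI |].
  apply sqrt_le_div_of_mul_sq_le; [apply Rpower_gt_0 |].
  rewrite <- Rpower_pow, Rpower_mult by apply Rpower_gt_0.
  replace (delta1 * INR 2) with (2 * delta1) by (simpl; ring).
  lra.
Qed.
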